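(* Let $H$ be the graph on vertex set $\{0,1,\dots,10\}$ in which $i,j$ are adjacent iff $1\le|i-j|\le 3$. Suppose the edges of $H$ are colored red/blue with no red cycle of length $3$, $4$ or $5$, and suppose at least one of the edges $\{0,1\},\{0,2\},\{0,3\}$ is blue. Then there exist $k\in\{1,\dots,9\}$ and a blue path $P_B$ in $H[\{0,\dots,k\}]$ with endpoints $0$ and $k$ such that at least one edge $\{k,k+j\}$ with $j\in\{1,2,3\}$ and $k+j\le 10$ is blue, and \[\frac{|V(P_B)\cap\{1,\dots,k\}|}{k}\ge \frac47.\] *)

From mathcomp Require Import all_boot.
Set Implicit Arguments. Unset Strict Implicit. Unset Printing Implicit Defensive.

Definition distn (i j : nat) : nat := maxn i j - minn i j.

Definition adjH (i j : nat) : bool :=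
  [&& i <= 10, j <= 10, 1 <= distn i j & distn i j <= 3].

(* A red/blue edge colouring is a symmetric function c : nat -> nat -> bool,
   c i j = true meaning the edge {i,j} is BLUE, false meaning RED
   (only the values on edges of H matter). *)
Definition symmetric_col (c : nat -> nat -> bool) : Prop :=
  forall i j, c i j = c j i.

Definition red_edge (c : nat -> nat -> bool) : rel nat :=
  fun i j => adjH i j && ~~ c i j.

Definition blue_edge (c : nat -> nat -> bool) : rel nat :=
  fun i j => adjH i j && c i j.

Definition red_cycle (c : nat -> nat -> bool) (s : seq nat) : bool :=
  uniq s && cycle (red_edge c) s.

Definition no_red_C345 (c : nat -> nat -> bool) : Prop :=
  forall s : seq nat, 3 <= size s <= 5 -> ~~ red_cycle c s.

Definition blue_path_0k (c : nat -> nat -> bool) (k : nat) (p : seq nat) : bool :=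
  [&& uniq (0 :: p), all (fun x => x <= k) (0 :: p),
      path (blue_edge c) 0 p & last 0 p == k].

From mathcomp Require Import all_boot.
Set Implicit Arguments. Unset Strict Implicit.

(* The theorem is a finite statement about the 2^27 red/blue colourings of
   the 27 edges of H, and we prove it by a certified exhaustive search.
   Edges are listed in a fixed order ([edges_H]); a partial colouring is a
   [seq bool] giving the colours of an initial segment of that list.  A
   partial colouring is *settled* when already on its coloured edges
   (a) the hypothesis "one of 0-1, 0-2, 0-3 is blue" fails, or
   (b) one of a fixed list of candidate 3-, 4- or 5-cycles is red, or
   (c) one of a fixed list of candidate witnesses (k, blue path, j) works.
   [split_search] splits an unsettled partial colouring on the colour of its next
   edge; a generic induction ([split_search_sound]) shows that a successful run
   proves any property implied by settledness for every colouring it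
   extends. *)

Definition edges_H : seq (nat * nat) :=
  [:: (0,1); (0,2); (1,2); (0,3); (1,3); (2,3); (1,4); (2,4); (3,4);
      (2,5); (3,5); (4,5); (3,6); (4,6); (5,6); (4,7); (5,7); (6,7);
      (5,8); (6,8); (7,8); (6,9); (7,9); (8,9); (7,10); (8,10); (9,10)].

Definition colour_of (a : seq bool) (i j : nat) : option bool :=
  let e := (minn i j, maxn i j) in
  if (e \in edges_H) && (index e edges_H < size a)
  then Some (nth false a (index e edges_H)) else None.

Definition red_in (a : seq bool) : rel nat :=
  fun i j => adjH i j && (colour_of a i j == Some false).
Definition blue_in (a : seq bool) : rel nat :=
  fun i j => adjH i j && (colour_of a i j == Some true).

(* Certificates: cycles and witnesses that together suffice to settle
   every colouring.  They were computed beforehand; nothing about them is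
   assumed, each use is re-checked on the current partial colouring. *)
Definition red_cycle_candidates : seq (seq nat) :=
  [:: [:: 0; 1; 2]; [:: 0; 1; 3]; [:: 1; 2; 3]; [:: 1; 2; 4];
     [:: 1; 3; 4]; [:: 2; 3; 4]; [:: 2; 3; 5]; [:: 2; 4; 5];
     [:: 3; 4; 5]; [:: 3; 4; 6]; [:: 3; 5; 6]; [:: 4; 5; 6];
     [:: 4; 5; 7]; [:: 4; 6; 7]; [:: 5; 6; 7]; [:: 7; 8; 9];
     [:: 0; 1; 2; 3]; [:: 0; 1; 3; 2]; [:: 0; 1; 4; 2]; [:: 0; 1; 4; 3];
     [:: 0; 2; 1; 3]; [:: 1; 2; 3; 4]; [:: 1; 2; 4; 3]; [:: 1; 2; 5; 3];
     [:: 1; 2; 5; 4]; [:: 1; 3; 2; 4]; [:: 1; 3; 5; 4]; [:: 1; 3; 6; 4];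
     [:: 2; 3; 4; 5]; [:: 2; 3; 5; 4]; [:: 2; 3; 6; 4]; [:: 2; 3; 6; 5];
     [:: 2; 4; 3; 5]; [:: 3; 5; 4; 6]; [:: 4; 5; 8; 6]; [:: 4; 5; 8; 7];
     [:: 4; 6; 5; 7]; [:: 4; 6; 8; 7]; [:: 4; 6; 9; 7];
     [:: 0; 1; 2; 4; 3]; [:: 0; 1; 2; 5; 3]; [:: 0; 1; 3; 4; 2];
     [:: 0; 1; 3; 5; 2]; [:: 0; 1; 4; 2; 3]; [:: 0; 1; 4; 3; 2];
     [:: 0; 1; 4; 5; 2]; [:: 1; 2; 3; 5; 4]; [:: 1; 2; 3; 6; 4];
     [:: 1; 2; 5; 3; 4]; [:: 1; 2; 5; 6; 4]; [:: 1; 2; 5; 7; 4];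
     [:: 1; 3; 2; 5; 4]; [:: 1; 3; 5; 6; 4]; [:: 1; 3; 5; 7; 4];
     [:: 1; 3; 6; 5; 4]; [:: 2; 3; 6; 4; 5]].

Definition witness_candidates : seq (nat * seq nat * nat) :=
  [:: (1, [:: 1], 1); (1, [:: 1], 2); (1, [:: 1], 3);
     (3, [:: 2; 1; 3], 1); (3, [:: 2; 1; 3], 2); (3, [:: 2; 1; 3], 3);
     (3, [:: 2; 3], 1); (3, [:: 2; 3], 2); (4, [:: 2; 1; 4], 1);
     (4, [:: 2; 1; 4], 2); (4, [:: 2; 1; 4], 3); (4, [:: 2; 3; 1; 4], 1);
     (4, [:: 3; 1; 2; 4], 1); (4, [:: 3; 1; 2; 4], 2); (4, [:: 3; 1; 2; 4], 3);
     (4, [:: 3; 1; 4], 1); (4, [:: 3; 1; 4], 2); (4, [:: 3; 1; 4], 3);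
     (4, [:: 3; 2; 1; 4], 1); (4, [:: 3; 2; 1; 4], 2); (4, [:: 3; 2; 1; 4], 3);
     (4, [:: 3; 2; 4], 1); (4, [:: 3; 2; 4], 2); (5, [:: 2; 1; 4; 3; 5], 1);
     (5, [:: 2; 4; 1; 3; 5], 1); (5, [:: 2; 4; 3; 5], 1); (5, [:: 2; 4; 3; 5], 2);
     (5, [:: 2; 4; 5], 1); (5, [:: 2; 4; 5], 2); (5, [:: 3; 1; 2; 5], 1);
     (5, [:: 3; 1; 4; 2; 5], 1); (5, [:: 3; 2; 5], 1); (5, [:: 3; 4; 1; 2; 5], 1);
     (6, [:: 2; 4; 3; 6], 1); (6, [:: 2; 5; 3; 4; 6], 1); (6, [:: 2; 5; 3; 6], 1);
     (7, [:: 3; 5; 6; 7], 1); (7, [:: 3; 5; 6; 7], 2); (7, [:: 3; 6; 5; 7], 1);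
     (7, [:: 3; 6; 5; 7], 2); (8, [:: 3; 5; 7; 6; 8], 1); (8, [:: 3; 6; 7; 5; 8], 1)].

Definition hyp_refuted (a : seq bool) : bool :=
  [&& colour_of a 0 1 == Some false, colour_of a 0 2 == Some false
    & colour_of a 0 3 == Some false].

Definition has_red_C345 (a : seq bool) : bool :=
  has (fun s => [&& 3 <= size s <= 5, uniq s & cycle (red_in a) s])
    red_cycle_candidates.

Definition has_witness (a : seq bool) : bool :=
  has (fun w : nat * seq nat * nat => let: (k, p, j) := w in
    [&& 1 <= k <= 9, uniq (0 :: p), all (fun x => x <= k) (0 :: p),
        path (blue_in a) 0 p, last 0 p == k, 1 <= j <= 3, k + j <= 10,
        colour_of a k (k + j) == Some true &
        4 * k <= 7 * count (fun x => 1 <= x <= k) (0 :: p)])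
    witness_candidates.

Definition settled (a : seq bool) : bool :=
  [|| hyp_refuted a, has_red_C345 a | has_witness a].

(* Branch on the colour of the next edge until [ok] holds, within [fuel]
   levels of branching.  Written with [if] rather than [||]/[&&] so that
   evaluation by [vm_compute] prunes settled branches. *)
Fixpoint split_search (ok : pred (seq bool)) (fuel : nat) (a : seq bool) : bool :=
  if ok a then true else
  if fuel is f.+1 then
    if split_search ok f (rcons a true) then split_search ok f (rcons a false) else false
  else false.

(* Every colouring of H is settled by a search of depth 27 (one level per edge). *)
Lemma split_search_settled : split_search settled 27 [::].
Proof. by vm_compute. Qed.

Section Soundness.

Variable c : nat -> nat -> bool.
Hypothesis c_sym : symmetric_col c.

Definition agrees (a : seq bool) : Prop :=
  forall n, n < size a ->
    nth false a n = c (nth (0,0) edges_H n).1 (nth (0,0) edges_H n).2.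

Lemma agrees_nil : agrees [::].
Proof. by []. Qed.

Lemma agrees_rcons a :
  agrees a ->
  agrees (rcons a (c (nth (0,0) edges_H (size a)).1 (nth (0,0) edges_H (size a)).2)).
Proof.
move=> ag n; rewrite size_rcons ltnS leq_eqVlt => /orP[/eqP->|lt].
  by rewrite nth_rcons ltnn eqxx.
by rewrite nth_rcons lt; apply: ag.
Qed.

Lemma split_search_sound (ok : pred (seq bool)) (P : Prop) :
  (forall a, agrees a -> ok a -> P) ->
  forall fuel a, agrees a -> split_search ok fuel a -> P.
Proof.
move=> okP; elim=> [|f IH] a ag /=; case: ifP => [/(okP _ ag) // | _] //.
move: (agrees_rcons ag); case: (c _ _) => ag'; case: ifP => // ht hf.
  exact: IH ht.
exact: IH hf.
Qed.

Lemma colour_of_sound a i j b : agrees a -> colour_of a i j = Some b -> c i j = b.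
Proof.
move=> ag; rewrite /colour_of; case: ifP => // /andP[inE lt] [<-].
rewrite ag // nth_index //= /minn /maxn.
by case: ltnP.
Qed.

Lemma red_in_sound a i j : agrees a -> red_in a i j -> red_edge c i j.
Proof. by move=> ag /andP[h /eqP/(colour_of_sound ag) e]; rewrite /red_edge h e. Qed.

Lemma blue_in_sound a i j : agrees a -> blue_in a i j -> blue_edge c i j.
Proof. by move=> ag /andP[h /eqP/(colour_of_sound ag) e]; rewrite /blue_edge h e. Qed.

Definition conclusion : Prop :=
  exists k : nat, exists p : seq nat,
    [/\ 1 <= k <= 9,
        blue_path_0k c k p,
        (exists2 j : nat, 1 <= j <= 3 & (k + j <= 10) && c k (k + j))
      & 4 * k <= 7 * count (fun x => 1 <= x <= k) (0 :: p)].

Hypothesis c_noC345 : no_red_C345 c.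
Hypothesis c_blue0 : c 0 1 || c 0 2 || c 0 3.

(* Each of the three ways of being settled yields the conclusion for [c]:
   (a) and (b) contradict the hypotheses, (c) is the conclusion itself. *)
Lemma settled_sound a : agrees a -> settled a -> conclusion.
Proof.
move=> ag /or3P[/and3P[/eqP r1 /eqP r2 /eqP r3] | /hasP[s _ ] | /hasP[w _]].
- move: c_blue0.
  by rewrite (colour_of_sound ag r1) (colour_of_sound ag r2) (colour_of_sound ag r3).
- case/and3P=> sz u cy; case/negP: (c_noC345 sz).
  by rewrite /red_cycle u (sub_cycle _ cy) // => x y; apply: red_in_sound.
- case: w => [[k p] j] /and5P[hk u al pth /and5P[lst hj hkj /eqP blue_kj cnt]].
  exists k, p; split => //.
    by rewrite /blue_path_0k u al lst (sub_path _ pth) // => x y; apply: blue_in_sound.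
  by exists j => //; rewrite hkj (colour_of_sound ag blue_kj).
Qed.

End Soundness.

Theorem lemma2p2 (c : nat -> nat -> bool) :
  symmetric_col c ->
  no_red_C345 c ->
  (c 0 1 || c 0 2 || c 0 3) ->
  exists k : nat, exists p : seq nat,
    [/\ 1 <= k <= 9,
        blue_path_0k c k p,
        (exists2 j : nat, 1 <= j <= 3 & (k + j <= 10) && c k (k + j))
      & 4 * k <= 7 * count (fun x => 1 <= x <= k) (0 :: p)].
Proof.
move=> sym noC345 blue0.
exact: (split_search_sound (settled_sound sym noC345 blue0) (@agrees_nil c) split_search_settled).
Qed.
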